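(* Let $B_1,\dots,B_D$ be resonator blocks and $\lambda\ge0$. Suppose every block propagation matrix $\mathcal{P}^\lambda_d$ ($d=1,\dots,D$) is hyperbolic and the family $\{\mathcal{P}^\lambda_1,\dots,\mathcal{P}^\lambda_D\}$ satisfies the source-sink condition. Suppose moreover that the line spanned by $(1,0)^\top$ lies in the connected component of $\mathbb{RP}^1\setminus\{s(\mathcal{P}^\lambda_1),\dots,s(\mathcal{P}^\lambda_D)\}$ containing all sinks $u(\mathcal{P}^\lambda_1),\dots,u(\mathcal{P}^\lambda_D)$. Then for every block sequence $\chi\in\{1,\dots,D\}^{\mathbb{Z}}$, the block propagation matrix cocycle $j\mapsto\mathcal{P}^\lambda_{\chi(j)}$ does not admit a uniformly hyperbolic splitting $(u,s)$ with $(1,0)^\top\in s(0)$.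
   Context: A resonator block $B_d$ is a finite sequence of $\mathrm{len}(B_d)\ge1$ triples $(v_k,\ell_k,s_k)$ of positive reals. With $P^\lambda_{\ell,s,v}=\begin{pmatrix}1-s\frac{\ell}{v^2}\lambda & s\\ -\frac{\ell}{v^2}\lambda & 1\end{pmatrix}$, the block propagation matrix is $\mathcal{P}^\lambda_d=P^\lambda_{\ell_L,s_L,v_L}\cdots P^\lambda_{\ell_1,s_1,v_1}\in\mathrm{SL}(2,\mathbb{R})$, $L=\mathrm{len}(B_d)$. $A\in\mathrm{SL}(2,\mathbb{R})$ is hyperbolic if $|\mathrm{tr}A|>2$; then with eigenvalues $|\xi_1|<1<|\xi_2|$ and eigenlines $E_1,E_2$ its source is $s(A)=E_1$ and sink $u(A)=E_2$ in $\mathbb{RP}^1$ (the space of lines in $\mathbb{R}^2$). The source-sink condition for hyperbolic $\{A_1,\dots,A_D\}$: all $u(A_d)$ lie in one connected component of $\mathbb{RP}^1\setminus\{s(A_1),\dots,s(A_D)\}$. A uniformly hyperbolic splitting of a bounded $A:\mathbb{Z}\to\mathrm{SL}(2,\mathbb{R})$ is a pair $s,u:\mathbb{Z}\to\mathbb{RP}^1$ with $A(j)u(j)=u(j+1)$, $A(j)s(j)=s(j+1)$ and constants $C>0,\eta>1$ with $\|A_{-n}(j)\vec u\|,\|A_n(j)\vec s\|\le C\eta^{-n}$ for all $j\in\mathbb{Z}$, $n\in\mathbb{N}$, unit $\vec u\in u(j)$, $\vec s\in s(j)$, where $A_n(j)=A(j+n-1)\cdots A(j)$, $A_{-n}(j)=A(j-n)^{-1}\cdots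 A(j-1)^{-1}$. *)

From HB Require Import structures.
From mathcomp Require Import all_boot all_order all_algebra.
From mathcomp Require Import all_classical all_reals.
From mathcomp Require Import topology normedtype.
Set Implicit Arguments. Unset Strict Implicit. Unset Printing Implicit Defensive.
Import Order.TTheory GRing.Theory Num.Theory.
Import numFieldTopology.Exports numFieldNormedType.Exports.
Local Open Scope classical_set_scope.
Local Open Scope ring_scope.

Section Defs.
Variable R : realType.

Definition mx2 (a b c d : R) : 'M[R]_2 :=
  \matrix_(i < 2, j < 2)
    if val i == 0%N then (if val j == 0%N then a else b)
    else (if val j == 0%N then c else d).

Definition vec2 (a b : R) : 'cV[R]_2 :=
  \col_(i < 2) (if val i == 0%N then a else b).

Definition vnorm (w : 'cV[R]_2) : R := Num.sqrt (w 0 0 ^+ 2 + w 1 0 ^+ 2).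

Definition Pmat (lam : R) (t : R * R * R) : 'M[R]_2 :=
  let: (v, l, s) := t in
  mx2 (1 - s * (l / v ^+ 2) * lam) s (- (l / v ^+ 2) * lam) 1.

Definition is_block (B : seq (R * R * R)) : Prop :=
  (0 < size B)%N /\
  forall t, t \in B -> [/\ 0 < t.1.1, 0 < t.1.2 & 0 < t.2].

(* block propagation matrix  P_L ... P_1  for B = [:: t_1; ...; t_L] *)
Definition block_prop (lam : R) (B : seq (R * R * R)) : 'M[R]_2 :=
  foldr (fun t M => M *m Pmat lam t) 1%:M B.

Definition hyperbolic (A : 'M[R]_2) : Prop := 2 < `|\tr A|.

(* points of RP^1 are lines, represented as sets of vectors *)
Definition span1 (v : 'cV[R]_2) : set 'cV[R]_2 := [set c *: v | c in setT].

Definition source (A : 'M[R]_2) : set 'cV[R]_2 :=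
  [set w | exists xi : R, `|xi| < 1 /\ A *m w = xi *: w].
Definition sink (A : 'M[R]_2) : set 'cV[R]_2 :=
  [set w | exists xi : R, 1 < `|xi| /\ A *m w = xi *: w].

(* x and y (points of RP^1) lie in the same (path-)connected component of
   RP^1 \ S: there is a continuous path of nonzero vectors in R^2 whose
   spanned lines avoid S, starting on x and ending on y (paths in RP^1 are
   exactly projections of such paths). *)
Definition same_component (S : set (set 'cV[R]_2)) (x y : set 'cV[R]_2) : Prop :=
  exists g1 g2 : R -> R,
    [/\ {within `[0, 1]%classic, continuous g1},
        {within `[0, 1]%classic, continuous g2},
        (forall t, 0 <= t <= 1 ->
           vec2 (g1 t) (g2 t) != 0 /\ ~ S (span1 (vec2 (g1 t) (g2 t)))),
        span1 (vec2 (g1 0) (g2 0)) = x &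
        span1 (vec2 (g1 1) (g2 1)) = y].

(* cocycle iterates A_n(j) = A(j+n-1)...A(j), A_{-n}(j) = A(j-n)^-1...A(j-1)^-1 *)
Fixpoint cocycle_fwd (A : int -> 'M[R]_2) (n : nat) (j : int) : 'M[R]_2 :=
  match n with
  | 0%N => 1%:M
  | m.+1 => A (j + m%:Z)%R *m cocycle_fwd A m j
  end.
Fixpoint cocycle_bwd (A : int -> 'M[R]_2) (n : nat) (j : int) : 'M[R]_2 :=
  match n with
  | 0%N => 1%:M
  | m.+1 => invmx (A (j - m.+1%:Z)%R) *m cocycle_bwd A m j
  end.

(* uniformly hyperbolic splitting (u, s); the lines u(j), s(j) in RP^1 are
   given by nonzero representative vectors, u(j) = span1 (u j). *)
Definition uh_splitting (A : int -> 'M[R]_2) (u s : int -> 'cV[R]_2) : Prop :=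
  [/\ forall j, u j != 0 /\ s j != 0,
      forall j, (fun w => A j *m w) @` span1 (u j) = span1 (u (j + 1)%R),
      forall j, (fun w => A j *m w) @` span1 (s j) = span1 (s (j + 1)%R) &
      exists C eta : R, [/\ 0 < C, 1 < eta &
        forall (j : int) (n : nat) (w : 'cV[R]_2),
          vnorm w = 1 ->
          (span1 (u j) w -> vnorm (cocycle_bwd A n j *m w) <= C * eta ^- n) /\
          (span1 (s j) w -> vnorm (cocycle_fwd A n j *m w) <= C * eta ^- n)]].

End Defs.

From HB Require Import structures.
From mathcomp Require Import all_boot all_order all_algebra.
From mathcomp Require Import all_classical all_reals.
From mathcomp Require Import topology normedtype sequences.
From mathcomp Require Import ring lra.
Import Order.TTheory GRing.Theory Num.Theory.
Import numFieldTopology.Exports numFieldNormedType.Exports.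
Local Open Scope classical_set_scope.
Local Open Scope ring_scope.
Set Implicit Arguments. Unset Strict Implicit. Unset Printing Implicit Defensive.

(* Let s_min <= s_max be the extreme slopes x/y of the source lines of the blocks
   (none of them is the line of e1 = (1,0), so y <> 0 on each) and put
   q(x, y) = (x - s_min y)(x - s_max y).  Then q <= 0 on every source, and q does
   not vanish on a path from the line of e1 to a sink that avoids the sources, so
   q > 0 at every sink because q(e1) = 1.  For A in SL(2) with sink u (eigenvalue
   mu) and source w (eigenvalue xi = 1/mu), writing v = a u + b w gives
     q(A v) - q(v) = a^2 (mu^2 - 1) q(u) + b^2 (1 - xi^2) (- q(w)) >= 0,
   the cross terms cancelling because mu xi = 1.  Hence q(A_n(0) e1) >= 1 for
   all n, which is incompatible with the exponential decay of A_n(0) e1 that a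
   uniformly hyperbolic splitting with e1 in s(0) would force. *)

Lemma det_eigenP (F : fieldType) n (M : 'M[F]_n) a :
  reflect (exists2 v : 'cV_n, v != 0 & M *m v = a *: v) (\det (M - a%:M) == 0).
Proof.
have kerE (v : 'cV_n) : (M *m v == a *: v) = ((M - a%:M) *m v == 0).
  by rewrite mulmxBl mul_scalar_mx subr_eq0.
rewrite -det_tr; apply: (iffP det0P) => [[r r0 rM]|[v v0 /eqP Mv]].
- exists r^T; first by rewrite trmx_eq0.
  by apply/eqP; rewrite kerE -[_ - _]trmxK -trmx_mul rM trmx0.
- exists v^T; first by rewrite trmx_eq0.
  by move: Mv; rewrite kerE -trmx_mul => /eqP ->; rewrite trmx0.
Qed.

Section PlaneAlgebra.
Variable R : fieldType.
Implicit Types (M : 'M[R]_2) (u v w : 'cV[R]_2).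

Let ord2_0 : ord0 = 0 :> 'I_2. Proof. exact/val_inj. Qed.
Let ord2_1 : lift ord0 ord0 = 1 :> 'I_2. Proof. exact/val_inj. Qed.

Lemma col2P v w : v 0 0 = w 0 0 -> v 1 0 = w 1 0 -> v = w.
Proof.
have ord2 (i : 'I_2) : i = 0 \/ i = 1.
  by case: i => [[|[|//]] ?]; [left | right]; apply: val_inj.
by move=> e0 e1; apply/matrixP => i j; rewrite [j]ord1; case: (ord2 i) => ->.
Qed.

Lemma col2_neq0 v : v != 0 -> (v 0 0 != 0) || (v 1 0 != 0).
Proof.
apply: contraNT; rewrite negb_or !negbK => /andP[/eqP v0 /eqP v1].
by apply/eqP/col2P; rewrite mxE.
Qed.

Lemma mulmx2E M v i : (M *m v) i 0 = M i 0 * v 0 0 + M i 1 * v 1 0.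
Proof. by rewrite mxE !big_ord_recl big_ord0 addr0 ord2_0 ord2_1. Qed.

Lemma det_mx2 M : \det M = M 0 0 * M 1 1 - M 0 1 * M 1 0.
Proof.
rewrite (expand_det_row _ 0) !big_ord_recl big_ord0 addr0 /cofactor !det_mx11 !mxE /=.
rewrite ord2_0 ord2_1 (_ : lift 1 0 = 0 :> 'I_2); last exact: val_inj.
by rewrite expr0 expr1 mul1r mulN1r mulrN.
Qed.

Lemma det_sub_scalar_mx2 M x : \det (M - x%:M) = x ^+ 2 - \tr M * x + \det M.
Proof. by rewrite !det_mx2 /mxtrace !big_ord_recl big_ord0 !mxE /= ord2_0 ord2_1; ring. Qed.

Lemma det_sub_inv_scalar_mx2 M mu : \det M = 1 -> mu != 0 ->
  \det (M - mu^-1%:M) = mu ^- 2 * \det (M - mu%:M).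
Proof. by move=> detM mu0; rewrite !det_sub_scalar_mx2 detM; field. Qed.

Definition cross v w : R := v 0 0 * w 1 0 - w 0 0 * v 1 0.

Lemma cross_mulmx M v w : cross (M *m v) (M *m w) = \det M * cross v w.
Proof. by rewrite /cross !mulmx2E det_mx2; ring. Qed.

Lemma crossZ a b v w : cross (a *: v) (b *: w) = a * b * cross v w.
Proof. by rewrite /cross !mxE; ring. Qed.

Lemma cross_decomp u v w : cross u w *: v = cross v w *: u + cross u v *: w.
Proof. by apply: col2P; rewrite !mxE /cross; ring. Qed.

Lemma cross_eq0_parallel v w : v != 0 -> cross v w = 0 -> exists k, w = k *: v.
Proof.
move=> /col2_neq0 nz_v /eqP; rewrite subr_eq0 => /eqP vw.
case/orP: nz_v => [v0|v1].
- exists (w 0 0 / v 0 0); apply: col2P; rewrite !mxE ?divfK //.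
  by apply: (mulIf v0); rewrite mulrAC divfK // mulrC vw.
- exists (w 1 0 / v 1 0); apply: col2P; rewrite !mxE ?divfK //.
  by apply: (mulIf v1); rewrite mulrAC divfK // [RHS]mulrC vw.
Qed.

Lemma eigvec_cross_neq0 M v w a b : v != 0 -> w != 0 ->
  M *m v = a *: v -> M *m w = b *: w -> a != b -> cross v w != 0.
Proof.
move=> v0 w0 Mv Mw; apply: contraNneq => /(cross_eq0_parallel v0)[k wk].
have: (a - b) *: w = 0 by rewrite scalerBl -Mw wk -scalemxAr Mv !scalerA mulrC subrr.
by move/eqP; rewrite scaler_eq0 (negbTE w0) orbF subr_eq0.
Qed.

Lemma eigval_mul_det M v w a b : cross v w != 0 ->
  M *m v = a *: v -> M *m w = b *: w -> a * b = \det M.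
Proof. by move=> vw0 Mv Mw; apply: (mulIf vw0); rewrite -cross_mulmx Mv Mw crossZ. Qed.

End PlaneAlgebra.

Section QuadraticForm.
Variable R : realFieldType.
Implicit Types (M : 'M[R]_2) (u v w : 'cV[R]_2).

Lemma contracting_eigvecs_parallel M v w a b : \det M = 1 ->
  `|a| < 1 -> `|b| < 1 -> M *m v = a *: v -> M *m w = b *: w -> cross v w = 0.
Proof.
move=> detM a_lt1 b_lt1 Mv Mw; apply/eqP; apply: contraT => vw0.
have := mulr_ilt1 (normr_ge0 a) (normr_ge0 b) a_lt1 b_lt1.
by rewrite -normrM (eigval_mul_det vw0 Mv Mw) detM normr1 ltxx.
Qed.

Definition qform (s t : R) v := (v 0 0 - s * v 1 0) * (v 0 0 - t * v 1 0).

Definition qpolar (s t : R) v w :=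
  (v 0 0 - s * v 1 0) * (w 0 0 - t * w 1 0) + (w 0 0 - s * w 1 0) * (v 0 0 - t * v 1 0).

Lemma qformZ s t a v : qform s t (a *: v) = a ^+ 2 * qform s t v.
Proof. by rewrite /qform !mxE; ring. Qed.

Lemma qformD s t a b v w : qform s t (a *: v + b *: w) =
  a ^+ 2 * qform s t v + a * b * qpolar s t v w + b ^+ 2 * qform s t w.
Proof. by rewrite /qform /qpolar !mxE; ring. Qed.

Lemma qform_le0 s t w : w 1 0 != 0 -> s <= w 0 0 / w 1 0 <= t -> qform s t w <= 0.
Proof.
set x := w 0 0 / w 1 0 => w1 /andP[sx xt].
have -> : qform s t w = w 1 0 ^+ 2 * ((x - s) * (x - t)) by rewrite /qform /x; field.
by rewrite mulr_ge0_le0 ?sqr_ge0 // mulr_ge0_le0 ?subr_ge0 ?subr_le0.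
Qed.

Lemma qform_le_mulmx s t M u w mu xi v : \det M = 1 -> u != 0 -> w != 0 ->
  M *m u = mu *: u -> M *m w = xi *: w -> 1 < `|mu| -> `|xi| < 1 ->
  0 <= qform s t u -> qform s t w <= 0 -> qform s t v <= qform s t (M *m v).
Proof.
move=> detM u0 w0 Mu Mw mu_gt1 xi_lt1 qu_ge0 qw_le0.
have mu_neq_xi : mu != xi by apply: contraTneq mu_gt1 => ->; rewrite -leNgt ltW.
have uw0 := eigvec_cross_neq0 u0 w0 Mu Mw mu_neq_xi.
have muxi : mu * xi = 1 by rewrite (eigval_mul_det uw0 Mu Mw).
have mu2 : 1 <= mu ^+ 2 by rewrite -real_normK ?num_real // exprn_ege1 // ltW.
have xi2 : xi ^+ 2 <= 1 by rewrite -real_normK ?num_real // exprn_ile1 // ltW.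
set a := cross v w; set b := cross u v.
have Mv : cross u w *: (M *m v) = (a * mu) *: u + (b * xi) *: w.
  by rewrite scalemxAr cross_decomp mulmxDr -!scalemxAr Mu Mw !scalerA.
have uw2_gt0 : 0 < cross u w ^+ 2 by rewrite exprn_even_gt0.
rewrite -(ler_pM2l uw2_gt0) -!qformZ cross_decomp Mv !qformD -subr_ge0.
have -> : (a * mu) ^+ 2 * qform s t u + a * mu * (b * xi) * qpolar s t u w
    + (b * xi) ^+ 2 * qform s t w
    - (a ^+ 2 * qform s t u + a * b * qpolar s t u w + b ^+ 2 * qform s t w)
  = a ^+ 2 * (mu ^+ 2 - 1) * qform s t u + b ^+ 2 * (1 - xi ^+ 2) * - qform s t w
    + a * b * (mu * xi - 1) * qpolar s t u w by ring.
rewrite muxi subrr mulr0 mul0r addr0.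
apply: addr_ge0; apply: mulr_ge0; rewrite ?oppr_ge0 //.
  by apply: mulr_ge0; rewrite ?sqr_ge0 ?subr_ge0.
by apply: mulr_ge0; rewrite ?sqr_ge0 ?subr_ge0.
Qed.

End QuadraticForm.

Section Eigenlines.
Variable R : realType.
Implicit Types (M : 'M[R]_2) (u v w : 'cV[R]_2).

Lemma span1_self v : span1 v v.
Proof. by exists 1; rewrite ?scale1r. Qed.

Lemma span1_e1_coord1 v : span1 (vec2 1 0) v -> v 1 0 = 0.
Proof. by case=> c _ <-; rewrite !mxE /= mulr0. Qed.

Lemma det1_source_exists M u mu : \det M = 1 -> u != 0 ->
  M *m u = mu *: u -> 1 < `|mu| -> exists2 w, w != 0 & source M w.
Proof.
move=> detM u0 Mu mu_gt1; have mu0 : mu != 0 by rewrite -normr_gt0 (lt_trans ltr01).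
have mu_root : \det (M - mu%:M) == 0 by apply/det_eigenP; exists u.
have /det_eigenP[w w0 Mw] : \det (M - mu^-1%:M) == 0.
  by rewrite det_sub_inv_scalar_mx2 // (eqP mu_root) mulr0.
exists w => //; exists mu^-1; split => //.
by rewrite normfV invf_lt1 // (lt_trans ltr01).
Qed.

Lemma source_span M w : \det M = 1 -> w != 0 -> source M w -> source M = span1 w.
Proof.
move=> detM w0 [xi [xi_lt1 Mw]].
apply/seteqP; split => [v [a [a_lt1 Mv]] | _ [k _ <-]].
- have vw0 := contracting_eigvecs_parallel detM xi_lt1 a_lt1 Mw Mv.
  by have [k ->] := cross_eq0_parallel w0 vw0; exists k.
- by exists xi; split => //; rewrite -scalemxAr Mw !scalerA mulrC.
Qed.

End Eigenlines.

Section Blocks.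
Variable R : realType.

Lemma det_Pmat (lam : R) t : \det (Pmat lam t) = 1.
Proof. by case: t => [[v l] s]; rewrite det_mx2 /Pmat !mxE /=; ring. Qed.

Lemma det_block_prop (lam : R) B : \det (block_prop lam B) = 1.
Proof. by elim: B => [|t B IH] /=; rewrite ?det1 // det_mulmx IH det_Pmat mulr1. Qed.

End Blocks.

Lemma continuous_nonvanishing_pos (R : realType) (f : R -> R) :
  {within `[0, 1], continuous f} -> (forall t, 0 <= t <= 1 -> f t != 0) ->
  0 < f 0 -> 0 < f 1.
Proof.
move=> f_cont f_neq0 f0_gt0; rewrite lt_neqAle eq_sym f_neq0 ?lexx ?ler01 //=.
rewrite leNgt; apply/negP => f1_lt0.
have [|c] := IVT ler01 f_cont (v := 0).
  by rewrite ge_min le_max (ltW f1_lt0) (ltW f0_gt0) orbT.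
by rewrite in_itv /= => /f_neq0 /eqP.
Qed.

Section SinkCone.
Variables (R : realType) (D : nat) (A : 'I_D -> 'M[R]_2).
Hypothesis detA : forall d, \det (A d) = 1.
Let sources : set (set 'cV[R]_2) := fun L => exists d, L = source (A d).
Hypothesis e1_sink_component :
  forall d, same_component sources (span1 (vec2 1 0)) (sink (A d)).

Lemma source_exists d : exists w, w != 0 /\ source (A d) w.
Proof.
have [g1 [g2 [_ _ path_ok _ path_end]]] := e1_sink_component d.
have /path_ok[u0 _] : 0 <= (1 : R) <= 1 by rewrite ler01 lexx.
have [mu [mu_gt1 Mu]] : sink (A d) (vec2 (g1 1) (g2 1)).
  by rewrite -path_end; exact: span1_self.
by have [w w0 w_src] := det1_source_exists (detA d) u0 Mu mu_gt1; exists w.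
Qed.

Variable w : 'I_D -> 'cV[R]_2.
Hypothesis w_source : forall d, w d != 0 /\ source (A d) (w d).

Lemma cross_source_neq0 d v : v != 0 -> ~ sources (span1 v) -> cross (w d) v != 0.
Proof.
have [w0 w_src] := w_source d; move=> v0 v_off.
apply/eqP => /(cross_eq0_parallel w0)[k vk].
have v_src : source (A d) v by rewrite (source_span (detA d) w0 w_src) vk; exists k.
by apply: v_off; exists d; rewrite (source_span (detA d) v0 v_src).
Qed.

Lemma source_coord1_neq0 d : w d 1 0 != 0.
Proof.
have [g1 [g2 [_ _ path_ok path_start _]]] := e1_sink_component d.
have /path_ok[v0 v0_off] : 0 <= (0 : R) <= 1 by rewrite lexx ler01.
have e1_v0 : span1 (vec2 1 0) (vec2 (g1 0) (g2 0)).
  by rewrite -path_start; exact: span1_self.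
have := cross_source_neq0 d v0 v0_off.
by rewrite /cross (span1_e1_coord1 e1_v0) mulr0 sub0r oppr_eq0 mulf_eq0 negb_or => /andP[].
Qed.

Variable i0 : 'I_D.
Let slope d := w d 0 0 / w d 1 0.
Let dmin := [arg min_(d < i0) slope d]%O.
Let dmax := [arg max_(d > i0) slope d]%O.
Let q := qform (slope dmin) (slope dmax).

Lemma qform_source_le0 d : q (w d) <= 0.
Proof.
have slope_min : slope dmin <= slope d by rewrite /dmin; case: arg_minP => // dm _; apply.
have slope_max : slope d <= slope dmax by rewrite /dmax; case: arg_maxP => // dM _; apply.
by apply: qform_le0; rewrite ?source_coord1_neq0 ?slope_min.
Qed.

Lemma qform_neq0_off_sources v : v != 0 -> ~ sources (span1 v) -> q v != 0.
Proof.
move=> v0 v_off.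
have cross_slope d : cross (w d) v = - (w d 1 0 * (v 0 0 - slope d * v 1 0)).
  by rewrite /cross /slope; field; exact: source_coord1_neq0.
have factor_neq0 d : v 0 0 - slope d * v 1 0 != 0.
  have := cross_source_neq0 d v0 v_off.
  by rewrite cross_slope oppr_eq0 mulf_eq0 negb_or => /andP[].
by rewrite /q /qform mulf_neq0.
Qed.

Lemma sink_qform_pos d :
  exists2 u, u != 0 /\ 0 < q u & exists2 mu, 1 < `|mu| & A d *m u = mu *: u.
Proof.
have [g1 [g2 [g1_cont g2_cont path_ok path_start path_end]]] := e1_sink_component d.
pose f t := (g1 t - slope dmin * g2 t) * (g1 t - slope dmax * g2 t).
have fE t : f t = q (vec2 (g1 t) (g2 t)) by rewrite /q /qform !mxE.
have f_cont : {within `[0, 1], continuous f}.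
  move=> t; have g1t := g1_cont t; have g2t := g2_cont t.
  by apply: cvgM; apply: cvgB => //; apply: cvgM => //; exact: cvg_cst.
have f_neq0 t : 0 <= t <= 1 -> f t != 0.
  by move=> /path_ok[v0 v_off]; rewrite fE qform_neq0_off_sources.
have f0_gt0 : 0 < f 0.
  have /path_ok[v0 _] : 0 <= (0 : R) <= 1 by rewrite lexx ler01.
  have e1_v0 : span1 (vec2 1 0) (vec2 (g1 0) (g2 0)).
    by rewrite -path_start; exact: span1_self.
  have g2_0 : g2 0 = 0 by have := span1_e1_coord1 e1_v0; rewrite mxE.
  move: v0; rewrite /f g2_0 !mulr0 !subr0 => /col2_neq0; rewrite !mxE /= eqxx orbF.
  by move=> g1_0; rewrite -expr2 exprn_even_gt0.
have [mu [mu_gt1 Mu]] : sink (A d) (vec2 (g1 1) (g2 1)).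
  by rewrite -path_end; exact: span1_self.
have /path_ok[u0 _] : 0 <= (1 : R) <= 1 by rewrite ler01 lexx.
exists (vec2 (g1 1) (g2 1)); last by exists mu.
by rewrite -fE; split => //; exact: continuous_nonvanishing_pos f_cont f_neq0 f0_gt0.
Qed.

Lemma qform_le_step d v : q v <= q (A d *m v).
Proof.
have [u [u0 qu_gt0] [mu mu_gt1 Mu]] := sink_qform_pos d.
have [w0 [xi [xi_lt1 Mw]]] := w_source d.
have qw_le0 := qform_source_le0 d.
exact: qform_le_mulmx (detA d) u0 w0 Mu Mw mu_gt1 xi_lt1 (ltW qu_gt0) qw_le0.
Qed.

Lemma qform_cocycle_ge1 (chi : int -> 'I_D) n :
  1 <= q (cocycle_fwd (fun j => A (chi j)) n 0 *m vec2 1 0).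
Proof.
elim: n => [|n IHn] /=; first by rewrite mul1mx /q /qform !mxE /= !mulr0 !subr0 mulr1.
by rewrite -mulmxA; apply: le_trans IHn (qform_le_step _ _).
Qed.

End SinkCone.

Section Decay.
Variable R : realType.

Lemma vnorm_e1 : vnorm (vec2 1 0 : 'cV[R]_2) = 1.
Proof. by rewrite /vnorm !mxE /= expr1n expr0n addr0 sqrtr1. Qed.

Lemma qform_le_vnorm (s t : R) v :
  2 * qform s t v <= (2 + s ^+ 2 + t ^+ 2) * vnorm v ^+ 2.
Proof.
rewrite /vnorm sqr_sqrtr ?addr_ge0 ?sqr_ge0 // -subr_ge0 /qform.
set x := v 0 0; set y := v 1 0.
have -> : (2 + s ^+ 2 + t ^+ 2) * (x ^+ 2 + y ^+ 2) - 2 * ((x - s * y) * (x - t * y))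
  = (s * y - t * y) ^+ 2 + (s * x + y) ^+ 2 + (t * x + y) ^+ 2 by ring.
by rewrite !addr_ge0 ?sqr_ge0.
Qed.

Lemma qform_ge1_not_decaying (s t C eta : R) (x : nat -> 'cV[R]_2) : 1 < eta ->
  (forall n, 1 <= qform s t (x n)) -> ~ (forall n, vnorm (x n) <= C * eta ^- n).
Proof.
move=> eta_gt1 q_ge1 decay; set K := 2 + s ^+ 2 + t ^+ 2.
have eta_gt0 : 0 < eta by rewrite (lt_trans ltr01).
have : geometric (K * C ^+ 2) (eta ^- 2) @ \oo --> 0.
  apply: cvg_geometric; rewrite ger0_norm ?invr_ge0 ?exprn_ge0 ?ltW //.
  by rewrite invf_lt1 ?exprn_gt0 // expr_gt1 // ltW.
move=> /cvgr_lt/(_ 2 (ltr0n _ 2)) [N _ /(_ N (leqnn N))] /=.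
apply/negP; rewrite -leNgt.
have K_gt0 : 0 < K by rewrite /K; have := sqr_ge0 s; have := sqr_ge0 t; lra.
have q2 : 2 <= 2 * qform s t (x N) by rewrite -[leLHS]mulr1 ler_pM2l.
apply: (le_trans q2); apply: (le_trans (qform_le_vnorm _ _ _)).
rewrite -mulrA ler_pM2l // exprVn -exprM mulnC exprM -exprVn -exprMn.
have vnorm_ge0 : 0 <= vnorm (x N) by apply: sqrtr_ge0.
by rewrite ler_sqr ?nnegrE // (le_trans vnorm_ge0).
Qed.

End Decay.

Theorem corollary4p5 (R : realType) (D : nat) (B : 'I_D -> seq (R * R * R))
    (lam : R) :
  (forall d, is_block (B d)) ->
  0 <= lam ->
  (forall d, hyperbolic (block_prop lam (B d))) ->
  (* source-sink condition: all sinks lie in one connected component of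
     RP^1 minus the sources *)
  (forall d d', same_component
     (fun L => exists d0, L = source (block_prop lam (B d0)))
     (sink (block_prop lam (B d))) (sink (block_prop lam (B d')))) ->
  (* the line spanned by (1,0)^T lies in that component *)
  (forall d, same_component
     (fun L => exists d0, L = source (block_prop lam (B d0)))
     (span1 (vec2 1 0)) (sink (block_prop lam (B d)))) ->
  forall chi : int -> 'I_D,
    ~ exists u s : int -> 'cV[R]_2,
        uh_splitting (fun j => block_prop lam (B (chi j))) u s /\
        span1 (s 0) (vec2 1 0).
Proof.
(* Only det = 1 of the blocks and the hypothesis on the line of (1,0) are needed. *)
move=> _ _ _ _ e1_sink_component chi [u [s [[_ _ _ [C [eta [_ eta_gt1 decay]]]] s0_e1]]].
have detA d := det_block_prop lam (B d).
have /choice[w w_source] := source_exists detA e1_sink_component.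
have q_ge1 := qform_cocycle_ge1 detA e1_sink_component w_source (chi 0) chi.
apply: (qform_ge1_not_decaying eta_gt1 q_ge1) => n.
exact: (decay 0 n _ (vnorm_e1 R)).2 s0_e1.
Qed.
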